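(* Let $\Sigma_A=(X,X_0,U,M,G_A,O_A)$ be the augmented transition system and let $\eta_x,\eta_u>0$, $M_{\max}\in\mathbb{N}_{>0}$ and $\varepsilon\ge\eta_x$. Let $\widetilde\Sigma^\varepsilon_A=(\widetilde X,\widetilde X_0,\widetilde U,\widetilde M,\widetilde G_A,\widetilde O_A)$ be the symbolic model of $\Sigma_A$ with these parameters. Then the relation $$R(\varepsilon)=\{(\tilde x,x)\in\widetilde X\times X:\ \|\tilde x-x\|\le\varepsilon\}$$ is a strong $\varepsilon$-approximate alternating simulation relation (strong $\varepsilon$-ASR) from $\widetilde\Sigma^\varepsilon_A$ to $\Sigma_A$.
   Context: Standing setup: a plant $x_{k+1}=f(x_k,u_k)$ with $f:\mathbb{R}^{n_x}\times\mathbb{R}^{n_u}\to\mathbb{R}^{n_x}$, compact initial set $X_0\subset\mathbb{R}^{n_x}$ and compact input set $U\subset\mathbb{R}^{n_u}$; there is $L_x\ge0$ with $\|f(x_1,u)-f(x_2,u)\|\le L_x\|x_1-x_2\|$ for all $x_1,x_2\in\mathbb{R}^{n_x}$, $u\in U$. $\|\cdot\|$ is the Euclidean norm and $\mathcal{B}_r(y)=\{y':\|y'-y\|\le r\}$. $\phi(x,u,m)$ ($m\ge1$ integer) is the state reached from $x$ by applying $u$ constantly for $m$ steps: $x_0=x$, $x_{k+1}=f(x_k,u)$, $\phi(x,u,m)=x_m$. Lattice: for $Y\subseteq\mathbb{R}^n$ and $\eta>0$, $[Y]_\eta=\{y\in Y:\ y_i=\frac{2\eta}{\sqrt n}a_i,\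 a_i\in\mathbb{Z},\ i=1,\dots,n\}$. Augmented transition system $\Sigma_A=(X,X_0,U,M,G_A,O_A)$: $X=\mathbb{R}^{n_x}$; $M=\mathbb{N}_{>0}$; $x^+\in G_A(x,u,m)$ iff $x^+=\phi(x,u,m)$; $O_A(x,u,m)$ is a set of finite state sequences with $(x_1,\dots,x_m)\in O_A(x,u,m)$ iff $x_p\in G_A(x,u,p)$ for all $p=1,\dots,m$. Symbolic model $\widetilde\Sigma^\varepsilon_A=(\widetilde X,\widetilde X_0,\widetilde U,\widetilde M,\widetilde G_A,\widetilde O_A)$ (defined for $\varepsilon\ge\eta_x$): $\widetilde X=[\mathbb{R}^{n_x}]_{\eta_x}$, $\widetilde X_0=[X_0]_{\eta_x}$, $\widetilde U=[U]_{\eta_u}$, $\widetilde M=\{1,\dots,M_{\max}\}$; $\tilde x^+\in\widetilde G_A(\tilde x,\tilde u,\tilde m)$ iff $\tilde x^+\in\widetilde X\cap\mathcal{B}_{\varepsilon_{\tilde m}}(\phi(\tilde x,\tilde u,\tilde m))$ where $\varepsilon_{\tilde m}=L_x^{\tilde m}\varepsilon+\eta_x$; $(\tilde x_1,\dots,\tilde x_{\tilde m})\in\widetilde O_A(\tilde x,\tilde u,\tilde m)$ iff $\tilde x_p\in\widetilde G_A(\tilde x,\tilde u,p)$ for all $p=1,\dots,\tilde m$. Strong $\varepsilon$-ASR: a relation $R\subseteq\widetilde X\times X$ is a strong $\varepsilon$-ASR from $\widetilde\Sigma^\varepsilon_A$ to $\Sigma_A$ if (D1) for every $\tilde x_0\in\widetilde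 X_0$ there is $x_0\in X_0$ with $(\tilde x_0,x_0)\in R$; (D2) every $(\tilde x,x)\in R$ satisfies $\|\tilde x-x\|\le\varepsilon$; (D3) for every $(\tilde x,x)\in R$ and every $\tilde u\in\widetilde U$, $\tilde m\in\widetilde M$, taking $u=\tilde u\in U$ and $m=\tilde m\in M$, for every $(x_1,\dots,x_m)\in O_A(x,u,m)$ there exists $(\tilde x_1,\dots,\tilde x_{m})\in\widetilde O_A(\tilde x,\tilde u,\tilde m)$ with $(\tilde x_p,x_p)\in R$ for all $p=1,\dots,m$. *)

From Stdlib Require Import Reals ZArith.
From mathcomp Require Import all_boot.
Open Scope R_scope.

Definition vec (n : nat) := 'I_n -> R.

Definition vnorm {n : nat} (x : vec n) : R :=
  sqrt (\big[Rplus/R0]_(i < n) (x i * x i)).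

Definition vdist {n : nat} (x y : vec n) : R := vnorm (fun i => x i - y i).

Definition vzero (n : nat) : vec n := fun _ => R0.

(* Compactness in R^n: closed and bounded (Heine-Borel). *)
Definition closed_set {n : nat} (S : vec n -> Prop) : Prop :=
  forall y, (forall e, 0 < e -> exists z, S z /\ vdist z y < e) -> S y.
Definition bounded_set {n : nat} (S : vec n -> Prop) : Prop :=
  exists r, forall y, S y -> vnorm y <= r.
Definition compact_set {n : nat} (S : vec n -> Prop) : Prop :=
  closed_set S /\ bounded_set S.

Definition lattice {n : nat} (Y : vec n -> Prop) (eta : R) (y : vec n) : Prop :=
  Y y /\ forall i : 'I_n, exists a : Z, y i = 2 * eta / sqrt (INR n) * IZR a.

Definition phi {nx nu : nat} (f : vec nx -> vec nu -> vec nx)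
  (x : vec nx) (u : vec nu) (m : nat) : vec nx := ssrnat.iter m (fun z => f z u) x.

Definition M_A (m : nat) : Prop := (1 <= m)%N.
Definition G_A {nx nu : nat} (f : vec nx -> vec nu -> vec nx)
  (x : vec nx) (u : vec nu) (m : nat) (xp : vec nx) : Prop := xp = phi f x u m.
(* a finite sequence (x_1,...,x_m) is stored as a seq of size m,
   x_p being the element of index p-1 *)
Definition O_A {nx nu : nat} (f : vec nx -> vec nu -> vec nx)
  (x : vec nx) (u : vec nu) (m : nat) (xs : seq (vec nx)) : Prop :=
  size xs = m /\
  forall p : nat, (1 <= p <= m)%N -> G_A f x u p (nth (@vzero nx) xs (p - 1)%N).

Definition Xt (nx : nat) (eta_x : R) : vec nx -> Prop :=
  lattice (fun _ => True) eta_x.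
Definition Xt0 {nx : nat} (X0 : vec nx -> Prop) (eta_x : R) : vec nx -> Prop :=
  lattice X0 eta_x.
Definition Ut {nu : nat} (U : vec nu -> Prop) (eta_u : R) : vec nu -> Prop :=
  lattice U eta_u.
Definition Mt (Mmax : nat) (m : nat) : Prop := (1 <= m <= Mmax)%N.
Definition eps_m (Lx eps eta_x : R) (m : nat) : R := Lx ^ m * eps + eta_x.
Definition Gt {nx nu : nat} (f : vec nx -> vec nu -> vec nx) (Lx eps eta_x : R)
  (xt : vec nx) (ut : vec nu) (m : nat) (xp : vec nx) : Prop :=
  Xt nx eta_x xp /\ vdist xp (phi f xt ut m) <= eps_m Lx eps eta_x m.
Definition Ot {nx nu : nat} (f : vec nx -> vec nu -> vec nx) (Lx eps eta_x : R)
  (xt : vec nx) (ut : vec nu) (m : nat) (xs : seq (vec nx)) : Prop :=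
  size xs = m /\
  forall p : nat, (1 <= p <= m)%N ->
    Gt f Lx eps eta_x xt ut p (nth (@vzero nx) xs (p - 1)%N).

Definition strong_eps_ASR {nx nu : nat} (f : vec nx -> vec nu -> vec nx)
  (X0 : vec nx -> Prop) (U : vec nu -> Prop) (Lx eta_x eta_u : R) (Mmax : nat)
  (eps : R) (Rel : vec nx -> vec nx -> Prop) : Prop :=
  (forall xt x, Rel xt x -> Xt nx eta_x xt) /\
  (forall xt0, Xt0 X0 eta_x xt0 -> exists x0, X0 x0 /\ Rel xt0 x0) /\
  (forall xt x, Rel xt x -> vdist xt x <= eps) /\
  (forall xt x, Rel xt x ->
     forall (ut : vec nu) (mt : nat), Ut U eta_u ut -> Mt Mmax mt ->
       U ut /\ M_A mt /\
       forall xs, O_A f x ut mt xs ->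
         exists xts, Ot f Lx eps eta_x xt ut mt xts /\
           forall p : nat, (1 <= p <= mt)%N ->
             Rel (nth (@vzero nx) xts (p - 1)%N) (nth (@vzero nx) xs (p - 1)%N)).

Definition R_eps {nx : nat} (eta_x eps : R) (xt x : vec nx) : Prop :=
  Xt nx eta_x xt /\ vdist xt x <= eps.

From HB Require Import structures.
From Stdlib Require Import Reals Lra Lia.
From mathcomp Require Import all_boot.
Open Scope R_scope.
Set Implicit Arguments.
Unset Strict Implicit.

(* Inclusion in Xt x X and (D2) hold by definition; (D1) is witnessed by
   x0 := xt0, which lies in X0 and is at distance 0 from itself.  For (D3),
   given a concrete run x_1, ..., x_m with x_p = phi(x, u, p), the symbolic
   run is obtained by snapping every x_p to a nearest lattice point xt_p, so
   that |xt_p - x_p| <= eta_x <= eps, and by the triangle inequality and the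
   iterated Lipschitz bound
     |xt_p - phi(xt, u, p)| <= eta_x + L_x^p |x - xt| <= L_x^p eps + eta_x. *)

(* Real addition is a commutative monoid law over which multiplication
   distributes, so the generic big-operator library applies to real sums. *)
Lemma Rplus_associative : associative Rplus.
Proof. by move=> x y z; rewrite Rplus_assoc. Qed.

HB.instance Definition _ :=
  Monoid.isComLaw.Build R R0 Rplus Rplus_associative Rplus_comm Rplus_0_l.
HB.instance Definition _ := Monoid.isMulLaw.Build R R0 Rmult Rmult_0_l Rmult_0_r.
HB.instance Definition _ :=
  Monoid.isAddLaw.Build R Rmult Rplus Rmult_plus_distr_r Rmult_plus_distr_l.

Notation "\rsum_ ( i < n ) F" := (\big[Rplus/R0]_(i < n) F)
  (at level 41, i, n at level 50, F at level 41).

Lemma rsum_le n (F G : 'I_n -> R) :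
  (forall i, F i <= G i) -> \rsum_(i < n) F i <= \rsum_(i < n) G i.
Proof.
move=> FG; apply: (big_ind2 (fun a b => a <= b)) => [|*|i _]; [lra | lra | exact: FG].
Qed.

Lemma rsum_ge0 n (F : 'I_n -> R) : (forall i, 0 <= F i) -> 0 <= \rsum_(i < n) F i.
Proof.
by move=> F0; apply: (big_ind (fun a => 0 <= a)) => [|*|i _]; [lra | lra | exact: F0].
Qed.

Lemma rsum_const n (c : R) : \rsum_(i < n) c = INR n * c.
Proof.
rewrite big_const_ord; elim: n => [|n IH]; first by rewrite /=; ring.
by rewrite iterS IH S_INR; ring.
Qed.

Lemma nonneg_quadratic_discriminant (A B P : R) : 0 <= A -> 0 <= B ->
  (forall t, 2 * t * P <= t * t * A + B) -> P * P <= A * B.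
Proof.
move=> A0 B0; have [Apos | <-] := Rle_lt_or_eq_dec 0 A A0 => quad.
- (* evaluate at the vertex t = P / A *)
  have := quad (P / A).
  have -> : 2 * (P / A) * P = 2 * (P * P / A) by field; lra.
  have -> : P / A * (P / A) * A = P * P / A by field; lra.
  move=> vertex.
  have -> : P * P = (P * P / A) * A by field; lra.
  rewrite [A * B]Rmult_comm; apply: Rmult_le_compat_r; lra.
- (* a degenerate (affine) quadratic forces P = 0 *)
  have [P0 | Pn0] := Req_dec P 0; first by rewrite P0; lra.
  have := quad ((B + 1) / (2 * P)).
  have -> : 2 * ((B + 1) / (2 * P)) * P = B + 1 by field.
  rewrite Rmult_0_r; lra.
Qed.

Lemma vnorm_ge0 n (a : vec n) : 0 <= vnorm a.
Proof. exact: sqrt_pos. Qed.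

Lemma vnorm_sq n (a : vec n) : vnorm a * vnorm a = \rsum_(i < n) (a i * a i).
Proof. by apply: sqrt_sqrt; apply: rsum_ge0 => i; nra. Qed.

Lemma cauchy_schwarz n (a b : vec n) :
  \rsum_(i < n) (a i * b i) <= vnorm a * vnorm b.
Proof.
set P := \rsum_(i < n) (a i * b i).
have PP : P * P <= (vnorm a * vnorm a) * (vnorm b * vnorm b).
  apply: nonneg_quadratic_discriminant; try by rewrite vnorm_sq; apply: rsum_ge0 => i; nra.
  move=> t; rewrite !vnorm_sq.
  have -> : t * t * (\rsum_(i < n) (a i * a i)) + \rsum_(i < n) (b i * b i) =
            \rsum_(i < n) (t * t * (a i * a i) + b i * b i) by rewrite big_split big_distrr.
  have -> : 2 * t * P = \rsum_(i < n) (2 * t * (a i * b i)) by rewrite big_distrr.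
  by apply: rsum_le => i; have := Rle_0_sqr (t * a i - b i); rewrite /Rsqr; nra.
have c0 : 0 <= vnorm a * vnorm b by apply: Rmult_le_pos; apply: vnorm_ge0.
have {PP} : P * P <= (vnorm a * vnorm b) * (vnorm a * vnorm b) by lra.
nra.
Qed.

Lemma vnorm_triangle n (a b : vec n) :
  vnorm (fun i => a i + b i) <= vnorm a + vnorm b.
Proof.
have expand : \rsum_(i < n) ((a i + b i) * (a i + b i)) =
    (\rsum_(i < n) (a i * a i)) + 2 * (\rsum_(i < n) (a i * b i)) +
    (\rsum_(i < n) (b i * b i)).
  rewrite big_distrr -!big_split; apply: eq_bigr => i _ /=; ring.
have CS := cauchy_schwarz a b.
apply: Rsqr_incr_0_var; last by have := vnorm_ge0 a; have := vnorm_ge0 b; lra.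
rewrite /Rsqr vnorm_sq /= expand -!vnorm_sq; lra.
Qed.

Lemma vdist_triangle n (x y z : vec n) : vdist x z <= vdist x y + vdist y z.
Proof.
apply: Rle_trans (vnorm_triangle (fun i => x i - y i) (fun i => y i - z i)).
by right; rewrite /vdist /vnorm; f_equal; apply: eq_bigr => i _; ring.
Qed.

Lemma vdist_sym n (x y : vec n) : vdist x y = vdist y x.
Proof. by rewrite /vdist /vnorm; f_equal; apply: eq_bigr => i _; ring. Qed.

Lemma vdist_refl n (x : vec n) : vdist x x = 0.
Proof.
rewrite /vdist /vnorm (eq_bigr (fun=> R0)) ?big1 ?sqrt_0 // => i _; ring.
Qed.

Lemma vnorm_le_coord n (y : vec n) (c : R) :
  (forall i, y i * y i <= c) -> vnorm y <= sqrt (INR n * c).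
Proof. by move=> yc; apply: sqrt_le_1_alt; rewrite -rsum_const; apply: rsum_le. Qed.

Definition round_grid (h t : R) : R := h * IZR (up (t / h + / 2) - 1).

Lemma round_grid_error (h t : R) : 0 < h ->
  (round_grid h t - t) * (round_grid h t - t) <= h * h / 4.
Proof.
move=> h0; rewrite /round_grid minus_IZR.
have [above below] := archimed (t / h + / 2).
set d := IZR (up (t / h + / 2)) - 1 - t / h.
have -> : h * (IZR (up (t / h + / 2)) - 1) - t = h * d by rewrite /d; field; lra.
have dd : d * d <= / 4 by rewrite /d; nra.
have hh : 0 <= h * h by nra.
have := Rmult_le_compat_l _ _ _ hh dd; lra.
Qed.

Definition snap (n : nat) (eta : R) (y : vec n) : vec n :=
  fun i => round_grid (2 * eta / sqrt (INR n)) (y i).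

Lemma snap_on_lattice n (eta : R) (y : vec n) : Xt n eta (snap eta y).
Proof. by split => // i; eexists. Qed.

(* The snapping error is at most eta: n coordinates, each off by at most
   half a grid step eta / sqrt n. *)
Lemma snap_error n (eta : R) (y : vec n) : 0 < eta -> vdist (snap eta y) y <= eta.
Proof.
move=> eta0; case: n y => [|n] y.
  by rewrite /vdist /vnorm big_ord0 sqrt_0; lra.
have n0 : 0 < INR n.+1 by apply: lt_0_INR; lia.
have sn0 : 0 < sqrt (INR n.+1) by apply: sqrt_lt_R0.
set h := 2 * eta / sqrt (INR n.+1).
have h0 : 0 < h by apply: Rdiv_lt_0_compat; lra.
have total : INR n.+1 * (h * h / 4) = eta * eta.
  have sq := sqrt_sqrt _ (pos_INR n.+1).
  have -> : h * h = 4 * (eta * eta) / (sqrt (INR n.+1) * sqrt (INR n.+1))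
    by rewrite /h; field; lra.
  by rewrite sq; field; lra.
apply: (Rle_trans _ (sqrt (INR n.+1 * (h * h / 4)))).
  by apply: vnorm_le_coord => i; exact: (round_grid_error (y i) h0).
by rewrite total sqrt_square; lra.
Qed.

Lemma phi_lipschitz nx nu (f : vec nx -> vec nu -> vec nx) (L : R) (u : vec nu) :
  0 <= L -> (forall x1 x2, vdist (f x1 u) (f x2 u) <= L * vdist x1 x2) ->
  forall p x1 x2, vdist (phi f x1 u p) (phi f x2 u p) <= L ^ p * vdist x1 x2.
Proof.
move=> L0 lip; elim => [|p IH] x1 x2 /=; first lra.
apply: Rle_trans (lip _ _) _; rewrite Rmult_assoc.
exact: Rmult_le_compat_l.
Qed.

Lemma snap_successor nx nu (f : vec nx -> vec nu -> vec nx) (Lx eta_x eps : R)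
    (u : vec nu) (x xt : vec nx) (p : nat) :
  0 <= Lx -> (forall x1 x2, vdist (f x1 u) (f x2 u) <= Lx * vdist x1 x2) ->
  0 < eta_x -> vdist xt x <= eps ->
  Gt f Lx eps eta_x xt u p (snap eta_x (phi f x u p)).
Proof.
move=> L0 lip eta0 close; split; first exact: snap_on_lattice.
apply: Rle_trans (vdist_triangle _ (phi f x u p) _) _.
have snapped := snap_error (phi f x u p) eta0.
have drift := phi_lipschitz L0 lip p x xt.
have Lp0 := pow_le Lx p L0.
rewrite vdist_sym in close.
have := Rmult_le_compat_l _ _ _ Lp0 close; rewrite /eps_m; lra.
Qed.

Theorem lemma2 (nx nu : nat) (f : vec nx -> vec nu -> vec nx)
  (X0 : vec nx -> Prop) (U : vec nu -> Prop) (Lx : R)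
  (HX0 : compact_set X0) (HU : compact_set U) (HLx : 0 <= Lx)
  (Hlip : forall (x1 x2 : vec nx) (u : vec nu), U u ->
            vdist (f x1 u) (f x2 u) <= Lx * vdist x1 x2)
  (eta_x eta_u : R) (Mmax : nat) (eps : R)
  (Hetax : 0 < eta_x) (Hetau : 0 < eta_u) (HMmax : (0 < Mmax)%N)
  (Heps : eta_x <= eps) :
  strong_eps_ASR f X0 U Lx eta_x eta_u Mmax eps (R_eps eta_x eps).
Proof.
split; first by move=> xt x [].
split.
  move=> xt0 [X0xt0 onlat]; exists xt0; rewrite /R_eps vdist_refl.
  by split; last split; [| split | lra].
split; first by move=> xt x [].
move=> xt x [_ close] u m [Uu _] /andP[m1 _]; do 2!split => //.
move=> xs [size_xs run].
(* the symbolic run snaps every state of the concrete run *)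
have snapped p : (1 <= p <= m)%N ->
    nth (vzero nx) (map (snap eta_x) xs) (p - 1) = snap eta_x (phi f x u p).
  move=> /andP[p1 pm]; rewrite (nth_map (vzero nx)); last first.
    by rewrite size_xs ltn_subLR // add1n ltnS.
  by rewrite -(run p); [| apply/andP].
exists (map (snap eta_x) xs); split.
  split=> [|p pm]; first by rewrite size_map.
  by rewrite snapped //; apply: snap_successor (fun x1 x2 => Hlip x1 x2 u Uu) Hetax close.
move=> p pm; rewrite snapped // (run p pm).
by split; [exact: snap_on_lattice | have := snap_error (phi f x u p) Hetax; lra].
Qed.
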